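(* For any fair allocation instance with agents $a_1,\dots,a_n$, a finite set $M$ of indivisible goods, XOS valuations $v_1,\dots,v_n$, and entitlements $b_1,\dots,b_n>0$, there exists an allocation $A=(A_1,\dots,A_n)$ of $M$ such that $v_i(A_i)\ge\frac1n\mathsf{WMMS}_i$ for every agent $a_i$.
   Context: A valuation $v:2^M\to\mathbb{R}_{\ge0}$ is XOS if there is a finite collection of additive functions $\{\ell_t\}_t$ with nonnegative item values such that $v(S)=\max_t\ell_t(S)$ for all $S\subseteq M$. An allocation is a partition of $M$ into bundles $A_1,\dots,A_n$, with $A_i$ given to $a_i$. Let $\Pi_n$ be the set of partitions $(S_1,\dots,S_n)$ of $M$ into $n$ bundles. The weighted maximin share of $a_i$ is $\mathsf{WMMS}_i=\max_{S\in\Pi_n}\min_{j\in[n]}v_i(S_j)\frac{b_i}{b_j}$. *)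

From mathcomp Require Import all_boot all_order all_algebra.
Set Implicit Arguments. Unset Strict Implicit. Unset Printing Implicit Defensive.
Import Order.TTheory GRing.Theory Num.Theory.
Local Open Scope ring_scope.

Definition additive_val (R : realFieldType) (M : finType) (l : M -> R) (S : {set M}) : R :=
  \sum_(x in S) l x.

Definition XOS (R : realFieldType) (M : finType) (v : {set M} -> R) : Prop :=
  exists (k : nat) (l : 'I_k.+1 -> M -> R),
    (forall t x, 0 <= l t x) /\
    (forall S : {set M}, v S = \big[Num.max/additive_val (l ord0) S]_(t < k.+1) additive_val (l t) S).

(* A partition of M into m bundles is encoded as a map M -> 'I_m;
   bundle j is the preimage of j. *)
Definition bundle (M : finType) (m : nat) (P : {ffun M -> 'I_m}) (j : 'I_m) : {set M} :=
  [set x | P x == j].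

Definition WMMS (R : realFieldType) (M : finType) (n : nat)
  (v : 'I_n.+1 -> {set M} -> R) (b : 'I_n.+1 -> R) (i : 'I_n.+1) : R :=
  let val P := \big[Num.min/ v i (bundle P ord0) * (b i / b ord0)]_(j < n.+1)
                   (v i (bundle P j) * (b i / b j)) in
  \big[Num.max/ val [ffun=> ord0]]_(P : {ffun M -> 'I_n.+1}) val P.

(* Let c_i = WMMS_i / n and let k be the number of agents
   still waiting.  Every waiting agent i keeps, inside the remaining goods,
   pairwise disjoint bundles each worth at least k * c_i, as many as there are
   waiting agents j with b_i <= b_j; initially these are the parts S_j with
   b_i <= b_j of an optimal WMMS partition, since v_i(S_j) >= WMMS_i b_j / b_i.
   In each round take a smallest set S of remaining goods that is worth c_j to
   some waiting agent j, and give S to such a j, say w, of largest entitlement.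
   Every proper subset of S is worth less than c_i to each waiting agent i, so
   by subadditivity removing S costs each bundle of i at most c_i, except a
   bundle containing S, which is lost.  Bundles are disjoint, so at most one is
   lost, and only if S is worth c_i to i, i.e. b_i <= b_w: then w also leaves
   the count of i. *)

From mathcomp Require Import all_boot all_order all_algebra.
From mathcomp Require Import lra.
Import Order.TTheory GRing.Theory Num.Theory.
Local Open Scope ring_scope.
Set Implicit Arguments. Unset Strict Implicit.

Lemma bigmax_arg (d : Order.disp_t) (T : orderType d) (I : finType) (F : I -> T)
    (i0 : I) :
  \big[Order.max/F i0]_i F i = F [arg max_(i > i0) F i]%O.
Proof.
case: arg_maxP => // i _ Fi_max; apply/le_anti; rewrite le_bigmax andbT.
by apply: bigmax_le => [|j _]; apply: Fi_max.
Qed.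

Section AdditiveVal.
Variables (R : realFieldType) (M : finType) (l : M -> R).
Implicit Types S T : {set M}.
Hypothesis l_ge0 : forall x, 0 <= l x.

Lemma additive_val_ge0 S : 0 <= additive_val l S.
Proof. exact: sumr_ge0. Qed.

Lemma additive_val_subset S T : S \subset T -> additive_val l S <= additive_val l T.
Proof.
move=> sST; rewrite [additive_val l T](big_setID S) (setIidPr sST) /=.
by rewrite lerDl additive_val_ge0.
Qed.

Lemma additive_val_setU S T :
  additive_val l (S :|: T) <= additive_val l S + additive_val l T.
Proof.
rewrite [additive_val l _](big_setID S) setUK setDUl setDv set0U /= lerD2l.
exact/additive_val_subset/subsetDl.
Qed.

End AdditiveVal.

Section XOS.
Variables (R : realFieldType) (M : finType) (v : {set M} -> R).
Hypothesis vXOS : XOS v.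
Implicit Types S T : {set M}.

Lemma XOS_supporting S : exists l : M -> R,
  [/\ forall x, 0 <= l x, v S = additive_val l S & forall T, additive_val l T <= v T].
Proof.
have [k [l [l_ge0 vE]]] := vXOS.
exists (l [arg max_(t > ord0) additive_val (l t) S]%O); split=> // [|T].
  by rewrite vE bigmax_arg.
by rewrite vE; exact: (@le_bigmax _ R _ _ (fun t => additive_val (l t) T)).
Qed.

Lemma XOS_ge0 S : 0 <= v S.
Proof. by have [l [l_ge0 -> _]] := XOS_supporting S; apply: additive_val_ge0. Qed.

Lemma XOS_set0 : v set0 = 0.
Proof. by have [l [_ -> _]] := XOS_supporting set0; rewrite /additive_val big_set0. Qed.

Lemma XOS_mono S T : S \subset T -> v S <= v T.
Proof.
have [l [l_ge0 -> vT]] := XOS_supporting S.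
by move=> sST; apply: le_trans (vT T); apply: additive_val_subset.
Qed.

Lemma XOS_subadditive S T : v (S :|: T) <= v S + v T.
Proof.
have [l [l_ge0 -> vT]] := XOS_supporting (S :|: T).
by apply: le_trans (additive_val_setU _ _ _) _; rewrite ?lerD.
Qed.

End XOS.

Lemma card_disjoint_supsets_le1 (I T : finType) (J : {set I}) (D : I -> {set T})
    (S : {set T}) :
  S != set0 -> {in J &, forall j j', j != j' -> [disjoint D j & D j']} ->
  (#|[set j in J | S \subset D j]| <= 1)%N.
Proof.
move=> S_nz D_disj; apply/card_le1_eqP => j j'; rewrite !inE.
move=> /andP[jJ sSDj] /andP[j'J sSDj']; apply/eqP; apply: contraNT S_nz => jj'.
have := D_disj j' j j'J jJ jj'; rewrite -setI_eq0 => /eqP D_disj_jj'.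
by rewrite -subset0 -D_disj_jj' subsetI sSDj' sSDj.
Qed.

Section GreedyAllocation.
Variables (R : realFieldType) (I M : finType) (v : I -> {set M} -> R) (b c : I -> R).
Hypothesis v_mono : forall i (S T : {set M}), S \subset T -> v i S <= v i T.
Hypothesis v_subadditive : forall i (S T : {set M}), v i (S :|: T) <= v i S + v i T.
Hypothesis v_set0 : forall i, v i set0 = 0.
Hypothesis c_ge0 : forall i, 0 <= c i.
Implicit Types (K J : {set I}) (G S T : {set M}).

Definition enough_bundles (K : {set I}) (G : {set M}) (i : I) : Prop :=
  exists (J : {set I}) (D : I -> {set M}),
    [/\ (#|[set j in K | (b i <= b j)%R]| <= #|J|)%N,
        {in J, forall j, D j \subset G /\ #|K|%:R * c i <= v i (D j)} &
        {in J &, forall j j', j != j' -> [disjoint D j & D j']}].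

Lemma enough_bundles_le K G i : i \in K -> enough_bundles K G i -> c i <= v i G.
Proof.
move=> iK [J [D [J_large D_val _]]].
have /card_gt0P[j jJ] : (0 < #|J|)%N.
  by apply: leq_trans J_large; apply/card_gt0P; exists i; rewrite inE iK lexx.
have [sDG D_ge] := D_val j jJ; apply: le_trans (le_trans D_ge (v_mono _ sDG)).
by rewrite ler_peMl // ler1n; apply/card_gt0P; exists i.
Qed.

Lemma exists_minimal_satisfying K G : (exists2 i, i \in K & c i <= v i G) ->
  exists S, [/\ S \subset G, exists2 w, w \in K & c w <= v w S
              & forall T i, T \proper S -> i \in K -> v i T < c i].
Proof.
move=> G_sat; pose sat S := (S \subset G) && [exists i in K, c i <= v i S].
have [|S /andP[sSG /exists_inP[w wK wS]] S_min] := arg_minnP (fun S => #|S|) (_ : sat G).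
  by rewrite /sat subxx; case: G_sat => i iK iG; apply/exists_inP; exists i.
exists S; split=> //; first by exists w.
move=> T i ltTS iK; rewrite ltNge; apply/negP => iT.
have /S_min : sat T.
  by rewrite /sat (subset_trans (proper_sub ltTS)) //; apply/exists_inP; exists i.
by rewrite leqNgt proper_card.
Qed.

Section RemoveBundle.
Variables (K : {set I}) (G S : {set M}) (w : I).
Hypothesis S_minimal : forall T i, T \proper S -> i \in K -> v i T < c i.
Hypothesis w_max : forall i, i \in K -> c i <= v i S -> b i <= b w.

Lemma costly_trace i D : i \in K -> c i < v i (D :&: S) ->
  [/\ S \subset D, S != set0 & b i <= b w].
Proof.
move=> iK lt_c_DS.
have lt_c_S : c i < v i S := lt_le_trans lt_c_DS (v_mono _ (subsetIr D S)).
have sSD : S \subset D.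
  have : ~~ (D :&: S \proper S).
    by apply: contraTN lt_c_DS => /S_minimal/(_ iK)/ltW; rewrite -leNgt.
  by rewrite properEneq subsetIr andbT negbK => /eqP/setIidPr.
split=> //; last exact/w_max/ltW.
by apply: contraTneq lt_c_S => ->; rewrite v_set0 -leNgt.
Qed.

Hypothesis wK : w \in K.

Lemma card_cheap_traces i J (D : I -> {set M}) : i \in K ->
    {in J &, forall j j', j != j' -> [disjoint D j & D j']} ->
  (#|J| <= #|[set j in J | (v i (D j :&: S) <= c i)%R]| + (b i <= b w)%R)%N.
Proof.
move=> iK D_disj; set J' := [set j in J | _].
have sJ'J : J' \subset J by apply/subsetP => j; rewrite inE => /andP[].
rewrite -(cardsID J' J) (setIidPr sJ'J) leq_add2l.
have [->|[j]] := set_0Vmem (J :\: J'); first by rewrite cards0.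
rewrite !inE andbC => /andP[jJ]; rewrite jJ -ltNge => /(costly_trace iK)[_ S_nz ->].
apply: leq_trans (card_disjoint_supsets_le1 S_nz D_disj).
apply/subset_leq_card/subsetP => k; rewrite !inE andbC => /andP[kJ].
by rewrite kJ -ltNge => /(costly_trace iK)[].
Qed.

Lemma enough_bundles_remove i :
  i \in K :\ w -> enough_bundles K G i -> enough_bundles (K :\ w) (G :\: S) i.
Proof.
rewrite in_setD1 => /andP[_ iK] [J [D [J_large D_val D_disj]]].
exists [set j in J | v i (D j :&: S) <= c i], (fun j => D j :\: S); split.
- rewrite -(leq_add2r (b i <= b w)%R).
  apply: leq_trans (leq_trans J_large (card_cheap_traces iK D_disj)).
  rewrite [X in (_ <= X)%N](cardsD1 w) inE wK addnC; apply/eq_leq.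
  by congr (_ + _)%N; apply: eq_card => j; rewrite !inE andbA.
- move=> j; rewrite inE => /andP[jJ DS_le]; have [sDG D_ge] := D_val j jJ.
  split; first exact: setSD.
  have := v_subadditive i (D j :&: S) (D j :\: S); rewrite setID.
  move: D_ge; rewrite (cardsD1 w K) wK natrD mulrDl mul1r.
  lra.
- move=> j j'; rewrite !inE => /andP[jJ _] /andP[j'J _] jj'.
  exact: disjointWl (subsetDl _ _) (disjointWr (subsetDl _ _) (D_disj j j' jJ j'J jj')).
Qed.

End RemoveBundle.

Lemma greedy_allocation K G : {in K, forall i, enough_bundles K G i} ->
  exists f : {ffun M -> option I},
    {in K, forall i, c i <= v i [set x in G | f x == Some i]}.
Proof.
move Ek: #|K| => k; elim: k K G Ek => [|k IH] K G Ek K_enough.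
  by exists [ffun=> None] => i; rewrite (cards0_eq Ek) inE.
have /card_gt0P[i0 i0K] : (0 < #|K|)%N by rewrite Ek.
have [S [sSG [w0 w0K w0S] S_min]] :=
  exists_minimal_satisfying (ex_intro2 _ _ i0 i0K (enough_bundles_le i0K (K_enough i0 i0K))).
have w0_sat : (w0 \in K) && (c w0 <= v w0 S) by rewrite w0K.
have [w /andP[wK wS] w_max] :=
  @arg_maxP _ _ _ w0 [pred i | (i \in K) && (c i <= v i S)] b w0_sat.
have {}w_max i : i \in K -> c i <= v i S -> b i <= b w.
  by move=> iK iS; apply: w_max; apply/andP.
have Ek' : #|K :\ w| = k by move: Ek; rewrite (cardsD1 w) wK => -[].
have [f hf] := IH (K :\ w) (G :\: S) Ek' (fun i iKw =>
  enough_bundles_remove S_min w_max wK iKw (K_enough i (subsetP (subD1set K w) i iKw))).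
exists [ffun x => if x \in S then Some w else f x] => i iK.
have [->|iw] := eqVneq i w.
  apply: le_trans wS (v_mono _ _); apply/subsetP => x xS.
  by rewrite inE ffunE xS (subsetP sSG x xS) eqxx.
apply: le_trans (hf i _) (v_mono _ _); first by rewrite !inE iw.
apply/subsetP => x; rewrite !inE ffunE => /andP[/andP[xS xG] fx].
by rewrite xG (negbTE xS).
Qed.

End GreedyAllocation.

Lemma bundle_disjoint (M : finType) m (P : {ffun M -> 'I_m}) j j' :
  j != j' -> [disjoint bundle P j & bundle P j'].
Proof.
move=> jj'; rewrite -setI_eq0 -subset0; apply/subsetP => x.
by rewrite !inE => /andP[/eqP ->]; rewrite (negbTE jj').
Qed.

Section WMMS.
Variables (R : realFieldType) (M : finType) (n : nat).
Variables (v : 'I_n.+1 -> {set M} -> R) (b : 'I_n.+1 -> R).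
Hypothesis v_ge0 : forall i S, 0 <= v i S.
Hypothesis b_gt0 : forall i, 0 < b i.

Lemma WMMS_ge0 i : 0 <= WMMS v b i.
Proof.
apply: le_trans (bigmax_ge_id _ _ _ _); apply: le_bigmin => [|j _];
  by rewrite mulr_ge0 ?divr_ge0 ?v_ge0 ?(ltW (b_gt0 _)).
Qed.

Lemma WMMS_witness i : exists P : {ffun M -> 'I_n.+1},
  forall j, WMMS v b i <= v i (bundle P j) * (b i / b j).
Proof.
rewrite /WMMS /= bigmax_arg.
by eexists => j; apply: bigmin_le.
Qed.

Lemma enough_bundles_WMMS i :
  enough_bundles v b (fun i => n.+1%:R^-1 * WMMS v b i) setT setT i.
Proof.
have [P P_ge] := WMMS_witness i.
exists [set j | b i <= b j], (bundle P); split.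
- by apply/subset_leq_card/subsetP => j; rewrite !inE.
- move=> j; rewrite inE => le_bij; split; first exact: subsetT.
  rewrite cardsT card_ord mulrA mulfV ?pnatr_eq0 // mul1r.
  apply: le_trans (P_ge j) _; apply: ler_piMr => //.
  by rewrite ler_pdivrMr // mul1r.
- by move=> j j' _ _; apply: bundle_disjoint.
Qed.

End WMMS.

Theorem theorem3 (R : realFieldType) (M : finType) (n : nat)
  (v : 'I_n.+1 -> {set M} -> R) (b : 'I_n.+1 -> R) :
  (forall i, XOS (v i)) -> (forall i, 0 < b i) ->
  exists A : {ffun M -> 'I_n.+1},
    forall i : 'I_n.+1, v i (bundle A i) >= (n.+1%:R)^-1 * WMMS v b i.
Proof.
move=> vXOS b_gt0.
have v_ge0 i S : 0 <= v i S := XOS_ge0 (vXOS i) S.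
have v_mono i := XOS_mono (vXOS i).
have [|i _|f f_share] := @greedy_allocation _ _ _ v b (fun i => n.+1%:R^-1 * WMMS v b i)
  v_mono (fun i => XOS_subadditive (vXOS i)) (fun i => XOS_set0 (vXOS i)) _ setT setT.
- by move=> i; rewrite mulr_ge0 ?invr_ge0 ?ler0n ?WMMS_ge0.
- exact: enough_bundles_WMMS.
exists [ffun x => odflt ord0 (f x)] => i.
apply: le_trans (f_share i (in_setT i)) (v_mono _ _ _ _).
by apply/subsetP => x; rewrite !inE ffunE => /eqP ->.
Qed.
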